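(* Let $G=(V,E)$ be a finite simple graph and $C\subseteq V$ such that no vertex of $V\setminus C$ is isolated in $G$, and let $m$ be a positive integer with $m\ge\gamma_{\rm gr}(G;C)$. Consider the integer program $F_1$ with binary variables $x_{vi},y_{vi}$ for $v\in V$, $i=1,\dots,m$ (and constants $x_{u0}=1$ for all $u\in V$): maximize $\sum_{i=1}^m\sum_{v\in V}y_{vi}$ subject to (a) $\sum_{v\in V}y_{vi}\le 1$ for all $i=1,\dots,m$; (b) $\sum_{i=1}^m y_{vi}\le 1$ for all $v\in V$; (c) $x_{ui}\le x_{u(i-1)}$ for all $u\in V$, $i=2,\dots,m$; (d) $x_{ui}+\sum_{v\in N\langle u\rangle}y_{vi}\le 1$ for all $u\in V$, $i=1,\dots,m$; (e) $y_{vi}\le\sum_{u\in N\langle v\rangle}(x_{u(i-1)}-x_{ui})$ for all $v\in V$, $i=2,\dots,m$; $x_{vi},y_{vi}\in\{0,1\}$. Then the optimal value of $F_1$ equals $\gamma_{\rm gr}(G;C)$.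
   Context: $N\langle v\rangle = N[v]$ (closed neighborhood) if $v\in C$ and $N\langle v\rangle=N(v)$ (open neighborhood) if $v\notin C$. A sequence $(v_1,\dots,v_k)$ of distinct vertices is legal if $N\langle v_i\rangle\setminus\bigcup_{j<i}N\langle v_j\rangle\neq\emptyset$ for all $i\ge 2$, and dominating if $\bigcup_j N\langle v_j\rangle=V$; $\gamma_{\rm gr}(G;C)$ is the maximum length of a legal dominating sequence of $G;C$. *)

From mathcomp Require Import all_boot all_order all_algebra.
Set Implicit Arguments. Unset Strict Implicit. Unset Printing Implicit Defensive.
Import Order.TTheory GRing.Theory Num.Theory.

Section Defs.
Variable T : finType.
Variable e : rel T.
Variable C : {set T}.

Definition simple_graph := symmetric e /\ irreflexive e.

Definition Nopen (v : T) : {set T} := [set u | e v u].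

Definition Nb (v : T) : {set T} :=
  if v \in C then v |: Nopen v else Nopen v.

Definition prefix_union (s : seq T) (i : nat) : {set T} :=
  \bigcup_(v <- take i s) Nb v.

(* legal: distinct vertices; every N<v_i> (i >= 2, 1-indexed) has a
   vertex not in the union of the earlier ones *)
Definition legal (s : seq T) : bool :=
  uniq s &&
  [forall i : 'I_(size s),
     (0 < i) ==> (Nb (tnth (in_tuple s) i) :\: prefix_union s i != set0)].

Definition dominating (s : seq T) : bool :=
  \bigcup_(v <- s) Nb v == [set: T].

(* Grundy domination number gamma_gr(G;C): maximum length of a legal
   dominating sequence (legal sequences have length <= #|T|). *)
Definition gamma_gr : nat :=
  \max_(k < #|T|.+1 | [exists s : k.-tuple T, legal s && dominating s]) k.

Variable m : nat.

Local Open Scope ring_scope.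
Definition xv (x : T -> nat -> bool) (u : T) (i : nat) : int :=
  if i == 0%N then 1 else Posz (nat_of_bool (x u i)).
Definition yv (y : T -> nat -> bool) (v : T) (i : nat) : int :=
  Posz (nat_of_bool (y v i)).

Definition F1_feasible (x y : T -> nat -> bool) : Prop :=
  (forall i, (1 <= i <= m)%N -> \sum_(v : T) yv y v i <= 1) /\
  (forall v, \sum_(1 <= i < m.+1) yv y v i <= 1) /\
  (forall u i, (2 <= i <= m)%N -> xv x u i <= xv x u i.-1) /\
  (forall u i, (1 <= i <= m)%N ->
               xv x u i + \sum_(v in Nb u) yv y v i <= 1) /\
  (forall v i, (2 <= i <= m)%N ->
               yv y v i <= \sum_(u in Nb v) (xv x u i.-1 - xv x u i)).

Definition F1_objective (y : T -> nat -> bool) : int :=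
  \sum_(1 <= i < m.+1) \sum_(v : T) yv y v i.

Definition F1_optimal_value (k : int) : Prop :=
  (exists x y, F1_feasible x y /\ F1_objective y = k) /\
  (forall x y, F1_feasible x y -> F1_objective y <= k).

End Defs.

From Pilot Require Import Defs.
From mathcomp Require Import all_boot all_order all_algebra zify.
Import Order.TTheory GRing.Theory Num.Theory.
Set Implicit Arguments. Unset Strict Implicit. Unset Printing Implicit Defensive.

(* A legal sequence (v_1, ..., v_k) with k <= m is encoded by y_{vi} = [v = v_i]
   and x_{ui} = [u is not yet dominated by v_1, ..., v_i]; constraint (e) holds
   because v_i footprints a vertex undominated before step i.  Conversely, (a)
   and (b) let a feasible solution pick at most one new vertex per step, (c)
   and (d) say that x_{u(i-1)} = 1 means u is undominated by the vertices picked
   before step i, so (e) makes the picked vertices a legal sequence of length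
   equal to the objective.  Legal sequences extend to legal dominating ones,
   because every vertex lies in some N<v> when V \ C has no isolated vertex, so
   the objective is at most gamma_gr, and a longest legal dominating sequence
   attains it. *)

Lemma sum_Posz (I : Type) (r : seq I) (P : pred I) (F : I -> nat) :
  (\sum_(i <- r | P i) Posz (F i))%R = Posz (\sum_(i <- r | P i) F i).
Proof. by rewrite (big_morph Posz PoszD (erefl : Posz 0 = 0%R)). Qed.

Lemma sum_Posz_count (I : Type) (r : seq I) (a : pred I) :
  (\sum_(i <- r) Posz (a i))%R = Posz (count a r).
Proof.
rewrite sum_Posz -sum1_count; congr Posz.
by rewrite [RHS]big_mkcond; apply: eq_bigr => i _; case: (a i).
Qed.

Section LegalSequences.
Variables (T : finType) (e : rel T) (C : {set T}).
Local Notation Nb := (Nb e C).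
Local Notation legal := (legal e C).
Local Notation dominating := (dominating e C).

Lemma mem_Nb_sym : symmetric e -> forall u v, (v \in Nb u) = (u \in Nb v).
Proof.
move=> e_sym u v; have [-> //|neq_uv] := eqVneq u v.
rewrite /Nb /Nopen; case: ifP => _; case: ifP => _;
  by rewrite !inE ?(negbTE neq_uv) ?(eq_sym v u) ?(negbTE neq_uv) e_sym.
Qed.

Lemma legalP s x0 : reflect
  (uniq s /\ forall i, (0 < i < size s)%N ->
     Nb (nth x0 s i) :\: prefix_union e C s i != set0)
  (legal s).
Proof.
apply: (iffP andP) => -[uniq_s legal_s]; split=> //.
  move=> i /andP[i_gt0 lt_i_s]; have := forallP legal_s (Ordinal lt_i_s).
  by rewrite /= i_gt0 (tnth_nth x0).
apply/forallP=> i; apply/implyP=> i_gt0.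
by rewrite (tnth_nth x0) legal_s // i_gt0 ltn_ord.
Qed.

Lemma legal_nil : legal [::].
Proof. by apply/andP; split=> //; apply/forallP=> -[]. Qed.

Lemma legal_rcons s v :
  legal s -> v \notin s ->
  ((0 < size s)%N -> exists2 u, u \in Nb v & u \notin \bigcup_(w <- s) Nb w) ->
  legal (rcons s v).
Proof.
move=> /(legalP _ v)[uniq_s legal_s] v_notin_s new_u; apply/(legalP _ v).
split=> [|i]; first by rewrite rcons_uniq v_notin_s.
rewrite size_rcons ltnS => /andP[i_gt0]; rewrite leq_eqVlt => /predU1P[eq_i|lt_i_s].
  subst i; rewrite nth_rcons ltnn eqxx /prefix_union -cats1 take_size_cat //.
  have [u u_new u_old] := new_u i_gt0.
  by apply/set0Pn; exists u; rewrite inE u_new andbT.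
rewrite nth_rcons lt_i_s /prefix_union -cats1 takel_cat 1?ltnW //.
by rewrite legal_s // i_gt0.
Qed.

Lemma legal_size_le_card s : legal s -> (size s <= #|T|)%N.
Proof. by case/andP=> uniq_s _; rewrite -(card_uniqP uniq_s) max_card. Qed.

Hypothesis e_sym : symmetric e.
Hypothesis no_isolated : forall v : T, v \notin C -> exists u, e v u.

Lemma exists_Nb_mem w : exists v, w \in Nb v.
Proof.
have [w_in_C|w_notin_C] := boolP (w \in C).
  by exists w; rewrite /Nb w_in_C setU11.
have [u e_wu] := no_isolated w_notin_C.
by exists u; rewrite mem_Nb_sym // /Nb; case: ifP; rewrite !inE e_wu ?orbT.
Qed.

Lemma legal_rcons_not_dominating s :
  legal s -> ~~ dominating s -> exists v, legal (rcons s v).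
Proof.
move=> legal_s; rewrite /dominating eqEsubset subsetT /=.
case/subsetPn=> w _ w_undominated; have [v w_in_Nv] := exists_Nb_mem w.
exists v; apply: legal_rcons => //; last by exists w.
apply: contra w_undominated => v_in_s.
by rewrite bigcup_seq; apply/bigcupP; exists v.
Qed.

Lemma legal_extend_dominating s : legal s ->
  exists s', [/\ legal s', dominating s' & (size s <= size s')%N].
Proof.
move=> legal_s; have [n] := ubnP (#|T| - size s).
elim: n s legal_s => [|n IH] s legal_s; first by rewrite ltn0.
move=> lt_s_n; have [dom_s|] := boolP (dominating s); first by exists s.
case/(legal_rcons_not_dominating legal_s)=> v legal_sv.
have [|s' [legal_s' dom_s' le_s']] := IH _ legal_sv.
  by have := legal_size_le_card legal_sv; rewrite size_rcons; lia.
by exists s'; split=> //; apply: leq_trans le_s'; rewrite size_rcons.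
Qed.

Lemma legal_size_le_gamma s : legal s -> (size s <= gamma_gr e C)%N.
Proof.
case/legal_extend_dominating=> s' [legal_s' dom_s' le_s']; apply: leq_trans le_s' _.
have lt_s'T : (size s' < #|T|.+1)%N by rewrite ltnS legal_size_le_card.
apply: (@leq_bigmax_cond _ _ (fun k : 'I_#|T|.+1 => val k) (Ordinal lt_s'T)).
by apply/existsP; exists (in_tuple s'); rewrite legal_s'.
Qed.

Lemma gamma_gr_attained :
  exists s, [/\ legal s, dominating s & size s = gamma_gr e C].
Proof.
have [s [legal_s dom_s _]] := legal_extend_dominating legal_nil.
have lt_sT : (size s < #|T|.+1)%N by rewrite ltnS legal_size_le_card.
have exists_s : [exists t : (Ordinal lt_sT).-tuple T, legal t && dominating t].
  by apply/existsP; exists (in_tuple s); rewrite legal_s.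
rewrite /gamma_gr (bigop.bigmax_eq_arg (Ordinal lt_sT) exists_s).
case: arg_maxnP => // k /existsP[t /andP[legal_t dom_t]] _.
by exists t; rewrite size_tuple.
Qed.

End LegalSequences.

Section SolutionToLegalSequence.
Variables (T : finType) (e : rel T) (C : {set T}) (m : nat).
Variables x y : T -> nat -> bool.
Local Notation Nb := (Nb e C).

Fixpoint seq_of_y k : seq T :=
  if k is k'.+1 then seq_of_y k' ++ [seq v <- index_enum T | y v k] else [::].

Lemma mem_seq_of_y k w : w \in seq_of_y k -> exists2 i, 0 < i <= k & y w i.
Proof.
elim: k => [|k IH] //=; rewrite mem_cat mem_filter.
case/orP=> [/IH[i /andP[i_gt0 le_ik] y_wi]|/andP[y_wk _]].
  by exists i; rewrite // i_gt0 ltnW.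
by exists k.+1; rewrite ?leqnn.
Qed.

Lemma size_seq_of_y k :
  size (seq_of_y k) = \sum_(1 <= i < k.+1) count (y^~ i) (index_enum T).
Proof.
elim: k => [|k IH]; first by rewrite big_geq.
by rewrite /= size_cat IH size_filter [RHS]big_nat_recr.
Qed.

Lemma F1_objective_seq_of_y : F1_objective m y = Posz (size (seq_of_y m)).
Proof.
rewrite /F1_objective size_seq_of_y -sum_Posz.
by apply: eq_bigr => i _; rewrite -sum_Posz_count.
Qed.

Hypothesis e_sym : symmetric e.
Hypothesis feasible : F1_feasible e C m x y.

Lemma F1_count_y_le1 i : 0 < i <= m -> count (y^~ i) (index_enum T) <= 1.
Proof.
case: feasible => col_y _ le_im.
by rewrite -lez_nat -sum_Posz_count; apply: col_y.
Qed.

Lemma F1_y_once v i j : 0 < i -> i < j <= m -> y v i -> ~~ y v j.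
Proof.
case: feasible => _ [row_y _] i_gt0 /andP[lt_ij le_jm] y_vi; apply/negP => y_vj.
have := row_y v; rewrite /yv sum_Posz_count lez_nat -size_filter; apply/negP.
rewrite -ltnNge; apply: (@uniq_leq_size _ [:: i; j]); first by rewrite /= inE ltn_eqF.
move=> l; rewrite !inE mem_filter mem_index_iota => /orP[]/eqP->.
  by rewrite y_vi i_gt0 ltnS (leq_trans (ltnW lt_ij)).
by rewrite y_vj ltnS le_jm (leq_trans i_gt0 (ltnW lt_ij)).
Qed.

Lemma F1_x_antitone u i j : 0 < i <= j -> j <= m -> x u j -> x u i.
Proof.
case: feasible => _ [_ [mono_x _]] /andP[i_gt0 le_ij].
elim: j le_ij => [|j IH]; first by rewrite leqn0 => /eqP ->.
rewrite leq_eqVlt => /predU1P[-> //|]; rewrite ltnS => le_ij lt_jm x_uj.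
apply: IH => //; first exact: ltnW.
have := mono_x u j.+1; rewrite /xv /= ltnS (leq_trans i_gt0 le_ij) lt_jm.
rewrite ifN -?lt0n ?(leq_trans i_gt0) // x_uj lez_nat => /(_ isT).
by case: (x u j).
Qed.

Lemma F1_x_not_dominated u w i :
  0 < i <= m -> x u i -> w \in Nb u -> ~~ y w i.
Proof.
case: feasible => _ [_ [_ [excl_x _]]] i_range x_ui w_in_Nu; apply/negP => y_wi.
have := excl_x u i i_range; rewrite /xv /yv ifN -?lt0n ?(andP i_range).1 //.
by rewrite sum_Posz x_ui (bigD1 w) //= y_wi.
Qed.

Lemma F1_y_footprint v i :
  1 < i <= m -> y v i -> exists2 u, u \in Nb v & x u i.-1.
Proof.
case: feasible => _ [_ [_ [_ supp_y]]] i_range y_vi.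
apply/exists_inP; apply: contraLR (supp_y v i i_range) => /exists_inPn x_off.
rewrite -ltNge /yv y_vi; apply: (le_lt_trans (y := 0%R)) => //.
apply: sumr_le0 => u u_in_Nv.
by rewrite /xv !ifN ?(negbTE (x_off u u_in_Nv)) ?subr_le0 //; lia.
Qed.

Lemma x_not_dominated_seq_of_y u k :
  k <= m -> x u k -> u \notin \bigcup_(w <- seq_of_y k) Nb w.
Proof.
move=> le_km x_uk; rewrite bigcup_seq; apply/bigcupP => -[w].
case/mem_seq_of_y => i /andP[i_gt0 le_ik] y_wi u_in_Nw.
have x_ui : x u i by apply: F1_x_antitone x_uk; rewrite ?i_gt0.
have i_range : 0 < i <= m by rewrite i_gt0 (leq_trans le_ik).
rewrite mem_Nb_sym // in u_in_Nw.
by rewrite (negbTE (F1_x_not_dominated i_range x_ui u_in_Nw)) in y_wi.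
Qed.

Lemma legal_seq_of_y k : k <= m -> legal e C (seq_of_y k).
Proof.
elim: k => [_|k IH lt_km]; first exact: legal_nil.
have /F1_count_y_le1 : 0 < k.+1 <= m by [].
rewrite -size_filter /=; case E: [seq v <- _ | _] => [|v [|//]] _.
  by rewrite cats0 IH // ltnW.
have y_v : y v k.+1 by have := mem_head v [::]; rewrite -E mem_filter => /andP[].
rewrite cats1; apply: legal_rcons; first exact/IH/ltnW.
  apply/negP => /mem_seq_of_y[i /andP[i_gt0 le_ik] y_vi].
  have := F1_y_once (j := k.+1) i_gt0 _ y_vi; rewrite ltnS le_ik lt_km y_v.
  by move/(_ isT).
move=> size_gt0; have k_gt0 : 0 < k.
  by move: size_gt0; rewrite !lt0n; apply: contraTneq => ->.
have [|u u_in_Nv x_uk] := F1_y_footprint _ y_v; first by rewrite ltnS k_gt0.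
by exists u; rewrite // x_not_dominated_seq_of_y // ltnW.
Qed.

End SolutionToLegalSequence.

Lemma sum_nat_range_indicator n k :
  \sum_(1 <= i < n.+1) ((0 < i <= k) : nat) = minn n k.
Proof.
elim: n => [|n IH]; first by rewrite big_geq ?min0n.
by rewrite big_nat_recr //= IH; case: (ltnP n k) => cmp_nk /=; lia.
Qed.

Lemma sum_Posz_eq_in (T : finType) (A : {set T}) a :
  (\sum_(v in A) Posz (v == a))%R = Posz (a \in A).
Proof.
have [a_in_A|a_notin_A] := boolP (a \in A).
  by rewrite (bigD1 a) //= eqxx big1 // => v /andP[_ /negbTE->].
by rewrite big1 // => v v_in_A; case: eqP v_in_A a_notin_A => // -> ->.
Qed.

Section LegalSequenceToSolution.
Variables (T : finType) (e : rel T) (C : {set T}) (s : seq T).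
Local Notation Nb := (Nb e C).
Local Notation prefix_union := (prefix_union e C s).

Definition x_of_seq (u : T) (i : nat) : bool := u \notin prefix_union i.
Definition y_of_seq (v : T) (i : nat) : bool :=
  (0 < i <= size s) && (v == nth v s i.-1).

Lemma y_of_seqE v w i : 0 < i <= size s -> y_of_seq v i = (v == nth w s i.-1).
Proof.
case/andP=> i_gt0 le_is; rewrite /y_of_seq i_gt0 le_is (set_nth_default w) //.
by rewrite prednK.
Qed.

Lemma y_of_seq_pred1 i : 0 < i <= size s -> exists a, y_of_seq^~ i =1 pred1 a.
Proof.
move=> i_range; have w : T.
  have : 0 < size s by case/andP: i_range => /leq_trans; apply.
  by case: s => // w.
by exists (nth w s i.-1) => v; rewrite /= (y_of_seqE _ w).
Qed.

Lemma count_y_of_seq i : count (y_of_seq^~ i) (index_enum T) = (0 < i <= size s).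
Proof.
have [i_range|i_out] := boolP (0 < i <= size s).
  have [a /eq_count->] := y_of_seq_pred1 i_range.
  by rewrite count_uniq_mem ?index_enum_uniq ?mem_index_enum.
rewrite (eq_count (a2 := pred0)) ?count_pred0 // => v.
by rewrite /y_of_seq (negbTE i_out).
Qed.

Lemma prefix_union_sub i j : i <= j -> prefix_union i \subset prefix_union j.
Proof.
move=> le_ij; rewrite /Defs.prefix_union -(cat_take_drop i (take j s)).
by rewrite take_takel // big_cat subsetUl.
Qed.

Lemma x_of_seq_antitone u i j : i <= j -> x_of_seq u j -> x_of_seq u i.
Proof. by move=> le_ij; apply: contra; apply/subsetP/prefix_union_sub. Qed.

Lemma xv_x_of_seq u i : xv x_of_seq u i = Posz (x_of_seq u i).
Proof. by case: i => //; rewrite /x_of_seq /Defs.prefix_union take0 big_nil inE. Qed.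

Lemma Nb_nth_sub_prefix_union w i :
  0 < i <= size s -> Nb (nth w s i.-1) \subset prefix_union i.
Proof.
case/andP=> i_gt0 le_is; rewrite /Defs.prefix_union bigcup_seq.
apply: (bigcup_sup (nth w s i.-1)).
by rewrite -(nth_take w (_ : i.-1 < i)) ?prednK // mem_nth // size_takel ?prednK.
Qed.

Lemma x_of_seq_step_ge0 u i : (0 <= xv x_of_seq u i.-1 - xv x_of_seq u i)%R.
Proof.
rewrite subr_ge0 !xv_x_of_seq lez_nat.
by case x_ui: (x_of_seq u i); rewrite ?(x_of_seq_antitone (leq_pred i) x_ui).
Qed.

Hypothesis e_sym : symmetric e.

Lemma x_of_seq_add_sum_y_le1 u i :
  (xv x_of_seq u i + \sum_(v in Nb u) yv y_of_seq v i <= 1)%R.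
Proof.
rewrite xv_x_of_seq; have [i_range|i_out] := boolP (0 < i <= size s); last first.
  rewrite big1 ?addr0 ?lez_nat ?leq_b1 // => v _.
  by rewrite /yv /y_of_seq (negbTE i_out).
have [a y_pred1] := y_of_seq_pred1 i_range.
rewrite (eq_bigr (fun v => Posz (v == a))) => [|v _]; last by rewrite /yv y_pred1.
rewrite sum_Posz_eq_in; have [a_in_Nu|] := boolP (a \in Nb u); last first.
  by rewrite addr0 lez_nat leq_b1.
suff /negbTE-> : ~~ x_of_seq u i by [].
have /andP[_ /eqP a_ith] : y_of_seq a i by rewrite y_pred1 /=.
rewrite negbK; apply: (subsetP (Nb_nth_sub_prefix_union a i_range)).
by rewrite -mem_Nb_sym // -a_ith.
Qed.

Hypothesis legal_s : legal e C s.

Lemma y_of_seq_le_sum_steps v i : 1 < i ->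
  (yv y_of_seq v i <= \sum_(u in Nb v) (xv x_of_seq u i.-1 - xv x_of_seq u i))%R.
Proof.
move=> i_gt1; rewrite /yv.
have steps_ge0 P : (0 <= \sum_(u | P u) (xv x_of_seq u i.-1 - xv x_of_seq u i))%R.
  by apply: sumr_ge0 => u _; apply: x_of_seq_step_ge0.
case y_vi: (y_of_seq v i) => //; move: y_vi => /andP[i_range /eqP v_ith].
have /andP[i_gt0 le_is] := i_range.
have : 0 < i.-1 < size s by rewrite ltn_predRL i_gt1 prednK.
case/(legalP _ _ _ v): legal_s => _ new_vertex /new_vertex/set0Pn[u].
rewrite -v_ith inE => /andP[u_new u_in_Nv].
have u_old : u \in prefix_union i.
  by apply: (subsetP (Nb_nth_sub_prefix_union v i_range)); rewrite -v_ith.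
rewrite (bigD1 u) //= !xv_x_of_seq /x_of_seq u_new u_old /=.
by rewrite subr0 lerDl steps_ge0.
Qed.

Lemma F1_feasible_of_legal m : F1_feasible e C m x_of_seq y_of_seq.
Proof.
have uniq_s : uniq s by case/andP: legal_s.
split; [|split; [|split; [|split]]].
- by move=> i _; rewrite sum_Posz_count count_y_of_seq lez_nat leq_b1.
- move=> v; rewrite sum_Posz_count lez_nat.
  apply: leq_trans (sub_count (a2 := pred1 (index v s).+1) _ _) _.
    move=> i /andP[/andP[i_gt0 le_is] /eqP->] /=.
    by rewrite index_uniq ?prednK // -ltnS prednK.
  by rewrite count_uniq_mem ?iota_uniq ?leq_b1.
- by move=> u i _; rewrite -subr_ge0 x_of_seq_step_ge0.
- by move=> u i _; apply: x_of_seq_add_sum_y_le1.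
- by move=> v i /andP[i_gt1 _]; apply: y_of_seq_le_sum_steps.
Qed.

Lemma F1_objective_y_of_seq m :
  size s <= m -> F1_objective m y_of_seq = Posz (size s).
Proof.
move=> le_sm; rewrite /F1_objective.
under eq_bigr => i _ do rewrite sum_Posz_count count_y_of_seq.
by rewrite sum_Posz sum_nat_range_indicator (minn_idPr le_sm).
Qed.
End LegalSequenceToSolution.

Theorem theorem1 (T : finType) (e : rel T) (C : {set T}) (m : nat) :
  simple_graph e ->
  (forall v : T, v \notin C -> exists u, e v u) ->
  (0 < m)%N ->
  (gamma_gr e C <= m)%N ->
  F1_optimal_value e C m (Posz (gamma_gr e C)).
Proof.
move=> [e_sym _] no_isolated _ gamma_le_m; split.
  have [s [legal_s _ size_s]] := gamma_gr_attained e_sym no_isolated.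
  exists (x_of_seq e C s), (y_of_seq s).
  by rewrite F1_objective_y_of_seq ?size_s //; split; first exact: F1_feasible_of_legal.
move=> x y feasible; rewrite F1_objective_seq_of_y lez_nat.
exact/(legal_size_le_gamma e_sym no_isolated)/(legal_seq_of_y e_sym feasible).
Qed.
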